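(* Let $m,n\ge 2$ and let $G$ be the ordered graph with vertices $v_1<\dots<v_{m+n}$ whose only edges are $v_1v_{m+1}$ and $v_mv_{m+n}$ (two crossing edges: one joining the first vertices and one joining the last vertices of the parts $\{v_1,\dots,v_m\}$ and $\{v_{m+1},\dots,v_{m+n}\}$). Then $R(G)=m+n+\max(m,n)-1$.
   Context: An ordered graph is a graph together with a specified linear ordering of its vertex set. An ordered graph $G$ is contained in an ordered graph $H$ if there is an order-preserving injection $V(G)\to V(H)$ mapping edges to edges. $R(G)$ denotes the 2-color ordered Ramsey number: the minimum $N$ such that every 2-coloring of the edges of the ordered complete graph on $N$ vertices contains a monochromatic copy of $G$. *)

From mathcomp Require Import all_boot.
Set Implicit Arguments. Unset Strict Implicit. Unset Printing Implicit Defensive.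

(* An ordered graph on k vertices: vertex set 'I_k with its natural order,
   edges given by a relation e; we only consult e i j for i < j, i.e. the
   edge set is {{i,j} | i < j, e i j}. *)

(* A 2-colouring of the edges of the ordered complete graph on N vertices:
   c i j is the colour of edge {i,j}, consulted only for i < j. *)

Definition mono_copy (k N : nat) (e : rel 'I_k) (c : 'I_N -> 'I_N -> bool) :=
  exists (b : bool) (f : 'I_k -> 'I_N),
    (forall i j : 'I_k, i < j -> f i < f j) /\
    (forall i j : 'I_k, i < j -> e i j -> c (f i) (f j) = b).

Definition ramsey_for (k : nat) (e : rel 'I_k) (N : nat) :=
  forall c : 'I_N -> 'I_N -> bool, mono_copy e c.

Definition is_ordered_ramsey_number (k : nat) (e : rel 'I_k) (r : nat) :=
  ramsey_for e r /\ (forall N, N < r -> ~ ramsey_for e N).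

(* The graph G of the statement, with 0-indexed vertices v_1..v_{m+n}
   corresponding to 0..m+n-1: edges v_1 v_{m+1} (0, m) and
   v_m v_{m+n} (m-1, m+n-1). *)
Definition two_crossing (m n : nat) : rel 'I_(m + n) :=
  fun i j =>
    ((val i == 0) && (val j == m)) || ((val i == m.-1) && (val j == (m + n).-1)).
Arguments two_crossing : clear implicits.

(* A monochromatic copy of the two-crossing graph exists iff
   there are positions a + (m-1) <= b < x <= d - (n-1) with the edges ax and
   bd of the same colour: the remaining vertices of G are isolated and fill
   the gaps.  Upper bound (for n <= m, on 2m+n-1 points; the case m < n
   follows by reversing the order): the five edges
   0m, (m-1)(2m+n-2), 0(2m-1), (2m-2)(2m+n-2), (m-1)(2m-1)
   form an odd cycle in which consecutive edges are valid pairs (ax, bd),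
   so two consecutive ones share a colour.  Lower bound: on fewer points,
   colouring an edge by whether its left end is < m-1 separates every valid
   pair, since then a < m-1 <= b. *)
From mathcomp Require Import all_boot zify.

Set Implicit Arguments.
Unset Strict Implicit.
Unset Printing Implicit Defensive.

Definition crossing_quadruple (m n N : nat) (c : 'I_N -> 'I_N -> bool) :=
  exists a b x d : 'I_N,
    [/\ a + m.-1 <= b, b < x, x + n.-1 <= d & c a x = c b d].

Lemma increasing_ord_gap k N (f : 'I_k -> 'I_N) :
  {homo f : i j / i < j} -> forall i j : 'I_k, i <= j -> f i + (j - i) <= f j.
Proof.
move=> f_incr i j ij.
have insubd_ord (l : 'I_k) : insubd i l = l := valKd i l.
suff gap t : i + t < k -> f i + t <= f (insubd i (i + t)).
  by have := gap (j - i); rewrite subnKC // insubd_ord; apply; exact: ltn_ord.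
elim: t => [|t IHt] ltk; first by rewrite !addn0 insubd_ord.
have f_step : f (insubd i (i + t)) < f (insubd i (i + t.+1)).
  by apply: f_incr; rewrite !val_insubd ltk ifT; lia.
have := IHt (ltnW _); lia.
Qed.

Definition crossing_embedding (m n a b x d i : nat) : nat :=
  if i < m.-1 then a + i
  else if i == m.-1 then b
  else if i < (m + n).-1 then x + (i - m)
  else d.

Section CrossingEmbedding.

Variables (m n a b x d : nat).
Hypotheses (ab : a + m.-1 <= b) (bx : b < x) (xd : x + n.-1 <= d).

Lemma crossing_embedding_le i : crossing_embedding m n a b x d i <= d.
Proof. by rewrite /crossing_embedding; repeat case: ifP; lia. Qed.

Lemma crossing_embedding_incr i j : i < j -> j < m + n ->
  crossing_embedding m n a b x d i < crossing_embedding m n a b x d j.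
Proof. by rewrite /crossing_embedding; repeat case: ifP; lia. Qed.

End CrossingEmbedding.

Lemma mono_copy_two_crossingP m n N (c : 'I_N -> 'I_N -> bool) :
  1 < m -> 1 < n -> mono_copy (two_crossing m n) c <-> crossing_quadruple m n c.
Proof.
move=> m_gt1 n_gt1; split.
  move=> [col [f [f_incr f_col]]].
  have ltk : 0 < m + n by lia.
  pose v k : 'I_(m + n) := insubd (Ordinal ltk) k.
  have vE k : k < m + n -> v k = k :> nat by move=> ltkk; rewrite val_insubd ltkk.
  have gap := increasing_ord_gap f_incr.
  exists (f (v 0)), (f (v m.-1)), (f (v m)), (f (v (m + n).-1)); split.
  - by have := gap (v 0) (v m.-1); rewrite !vE; lia.
  - by apply: f_incr; rewrite !vE; lia.
  - by have := gap (v m) (v (m + n).-1); rewrite !vE; lia.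
  - have edge k l : k < l < m + n -> two_crossing m n (v k) (v l) ->
      c (f (v k)) (f (v l)) = col.
      by move=> kl; apply: f_col; rewrite !vE //; lia.
    rewrite !edge /two_crossing /= ?vE ?eqxx ?orbT //; lia.
move=> [a [b [x [d [ab bx xd cad]]]]].
pose g i := crossing_embedding m n a b x d i.
have gE i : insubd d (g i) = g i :> nat.
  rewrite val_insubd ifT // (leq_ltn_trans _ (ltn_ord d)) //.
  exact: crossing_embedding_le.
exists (c a x), (fun i => insubd d (g i)); split=> [i j ij | i j ij].
  by rewrite !gE; apply: crossing_embedding_incr.
move=> /orP[|] /andP[/eqP /= i_val /eqP /= j_val]; last rewrite cad;
  by congr c; apply: val_inj => /=; rewrite gE /g /crossing_embedding;
     repeat case: ifP; lia.
Qed.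

Lemma crossing_quadruple_rev m n N (c c' : 'I_N -> 'I_N -> bool) :
  (forall i j, c' i j = c (rev_ord j) (rev_ord i)) ->
  crossing_quadruple m n c -> crossing_quadruple n m c'.
Proof.
move=> c'E [a [b [x [d [ab bx xd cad]]]]].
exists (rev_ord d), (rev_ord x), (rev_ord b), (rev_ord a).
have := ltn_ord d; rewrite !c'E !rev_ordK cad /=; split=> //; lia.
Qed.

Lemma bool_cycle5 (b1 b2 b3 b4 b5 : bool) :
  b1 = b2 \/ b3 = b2 \/ b3 = b4 \/ b5 = b4 \/ b1 = b5.
Proof. by case: b1; case: b2; case: b3; case: b4; case: b5; intuition. Qed.

Lemma crossing_quadruple_exists m n N (c : 'I_N -> 'I_N -> bool) :
  0 < n <= m -> 2 * m + n - 1 <= N -> crossing_quadruple m n c.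
Proof.
case: N c => [|N] c /andP[n_gt0 nm] hN; first lia.
pose col k l := c (inord k) (inord l).
have quadruple a b x d : col a x = col b d ->
    a + m.-1 <= b -> b < x -> x + n.-1 <= d -> d <= N -> crossing_quadruple m n c.
  move=> cad ab bx xd dN; exists (inord a), (inord b), (inord x), (inord d).
  by rewrite !inordK; try split=> //; lia.
have [e|[e|[e|[e|e]]]] := bool_cycle5 (col 0 m) (col m.-1 (2 * m + n - 2))
  (col 0 (2 * m - 1)) (col (2 * m - 2) (2 * m + n - 2)) (col m.-1 (2 * m - 1)).
all: by apply: (quadruple _ _ _ _ e); lia.
Qed.

Lemma no_crossing_quadruple m n N : 1 < m -> n <= m -> N < 2 * m + n - 1 ->
  ~ crossing_quadruple m n (fun i _ : 'I_N => i < m.-1).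
Proof.
move=> m_gt1 nm hN [a [b [x [d [ab bx xd]]]]].
have dN := ltn_ord d.
have -> : a < m.-1 by lia.
by have -> : b < m.-1 = false by lia.
Qed.

Lemma ramsey_for_two_crossingP m n N : 1 < m -> 1 < n ->
  ramsey_for (two_crossing m n) N <-> m + n + maxn m n - 1 <= N.
Proof.
move=> m_gt1 n_gt1; split=> [ramsey | hN c].
  rewrite leqNgt; apply/negP => hN.
  case: (leqP n m) => [nm | mn].
    have /(mono_copy_two_crossingP _ m_gt1 n_gt1) := ramsey (fun i _ => i < m.-1).
    by apply: no_crossing_quadruple; lia.
  have /(mono_copy_two_crossingP _ m_gt1 n_gt1) quad := ramsey (fun _ j => rev_ord j < n.-1).
  apply: (@no_crossing_quadruple n m N); try lia.
  by apply: (crossing_quadruple_rev _ quad) => i j; rewrite rev_ordK.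
apply/(mono_copy_two_crossingP c m_gt1 n_gt1); case: (leqP n m) => [nm | mn].
  by apply: crossing_quadruple_exists; lia.
apply: (@crossing_quadruple_rev n m N (fun i j => c (rev_ord j) (rev_ord i))).
  by move=> i j; rewrite !rev_ordK.
by apply: crossing_quadruple_exists; lia.
Qed.

Theorem proposition4p2 (m n : nat) (hm : 2 <= m) (hn : 2 <= n) :
  is_ordered_ramsey_number (two_crossing m n) (m + n + maxn m n - 1).
Proof.
split; first exact/ramsey_for_two_crossingP.
by move=> N hN /ramsey_for_two_crossingP; lia.
Qed.
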